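(* There exists $k_0$ such that for every $k\ge k_0$, every isothetic drawing of the Horton set of $n=2^k$ points has size at least $n^{\frac18\log n}$.
   Context: All logarithms are base 2. For a finite set $S$ of points in the plane with pairwise distinct $x$-coordinates, list its points in increasing order of $x$-coordinate as $p_0,\dots,p_{|S|-1}$ and set $S_{\mathrm{even}}=\{p_0,p_2,\dots\}$, $S_{\mathrm{odd}}=\{p_1,p_3,\dots\}$. For point sets $X,Y$, $X$ is high above $Y$ if every line through two points of $X$ lies strictly above every point of $Y$ and every line through two points of $Y$ lies strictly below every point of $X$. A Horton set of $2^k$ points is defined recursively: a set $H$ of $2^k$ points, no three collinear, with pairwise distinct $x$-coordinates, such that for $k=0$ it is a single point and for $k\ge1$ both $H_{\mathrm{even}}$ and $H_{\mathrm{odd}}$ are Horton sets of $2^{k-1}$ points and $H_{\mathrm{odd}}$ is high above $H_{\mathrm{even}}$. An isothetic drawing of the Horton set of $n=2^k$ points is a Horton set of $n$ points all of whose points have integer coordinates. The size of a set of points is the maximum absolute value of the coordinates of its points. *)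

From Stdlib Require Import Reals ZArith List Sorted.
Import ListNotations.

Definition point := (Z * Z)%type.

(* A finite point set with pairwise distinct x-coordinates is represented
   by the list of its points in strictly increasing order of x. *)
Definition xsorted (l : list point) : Prop :=
  Sorted (fun p q : point => (fst p < fst q)%Z) l.

Fixpoint evens (l : list point) : list point :=
  match l with
  | [] => []
  | [a] => [a]
  | a :: _ :: t => a :: evens t
  end.

Fixpoint odds (l : list point) : list point :=
  match l with
  | [] => []
  | [_] => []
  | _ :: b :: t => b :: odds t
  end.

Definition orient (a b c : point) : Z :=
  ((fst b - fst a) * (snd c - snd a) - (snd b - snd a) * (fst c - fst a))%Z.

Definition no_three_collinear (l : list point) : Prop :=
  forall p q r, In p l -> In q l -> In r l ->
    p <> q -> q <> r -> p <> r -> orient p q r <> 0%Z.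

(* the (non-vertical) line through a and b lies strictly above c *)
Definition line_above (a b c : point) : Prop :=
  (orient a b c * (fst b - fst a) < 0)%Z.

(* the (non-vertical) line through a and b lies strictly below c *)
Definition line_below (a b c : point) : Prop :=
  (0 < orient a b c * (fst b - fst a))%Z.

Definition high_above (X Y : list point) : Prop :=
  (forall a b c, In a X -> In b X -> a <> b -> In c Y -> line_above a b c) /\
  (forall a b c, In a Y -> In b Y -> a <> b -> In c X -> line_below a b c).

Fixpoint horton_rec (k : nat) (l : list point) : Prop :=
  match k with
  | O => length l = 1%nat
  | S k' => horton_rec k' (evens l) /\ horton_rec k' (odds l) /\
            high_above (odds l) (evens l)
  end.

(* Horton set of 2^k points (with integer coordinates = isothetic drawing) *)
Definition is_horton (k : nat) (l : list point) : Prop :=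
  xsorted l /\ no_three_collinear l /\ length l = Nat.pow 2 k /\ horton_rec k l.

Definition size (l : list point) : Z :=
  fold_right (fun p m => Z.max m (Z.max (Z.abs (fst p)) (Z.abs (snd p)))) 0%Z l.

Definition log2R (x : R) : R := (ln x / ln 2)%R.

From Stdlib Require Import Reals ZArith List Sorted Lia Lra Classical.

(* The points of a Horton set whose (1-based) index is a multiple of 2^t again form a
   Horton set, the level t, in which the odd points lie high above the even ones.  Measure
   how high an odd point of level t rises above the segment joining its two neighbours.
   At a coarse level this height is at least 1/(2s) by integrality, s being the size.
   Going down one level, for p odd at level t and a segment [m v] of level t+1 to its left,
   the line m v passes above both neighbours of p, so the height at p is at least the
   height of m above its level-(t+1) neighbours times the gap ratio (x_p - x_v)/(x_v - x_m).
   Among M disjoint candidate segments one ratio exceeds lam, since otherwise the gaps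
   x_p - x_v would grow like (1 + 1/lam)^M beyond 2s.  At level 0 the height is at most
   2s; so unless 2s is already large, 2^(sum of the gains) <= (2s)^2, and the gains of
   the top k/2 levels add up to more than k^2/4. *)

Lemma nth_odds : forall (l : list point) i d, nth i (odds l) d = nth (2 * i + 1) l d.
Proof.
  fix IH 1. intros [|a [|b t]] i d.
  - destruct i; reflexivity.
  - destruct i as [|[|i]]; reflexivity.
  - destruct i as [|i]; [reflexivity|].
    simpl odds. change (nth (S i) (b :: odds t) d) with (nth i (odds t) d).
    rewrite IH. replace (2 * S i + 1) with (S (S (2 * i + 1))) by lia. reflexivity.
Qed.

Lemma nth_evens : forall (l : list point) i d, nth i (evens l) d = nth (2 * i) l d.
Proof.
  fix IH 1. intros [|a [|b t]] i d.
  - destruct i; reflexivity.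
  - destruct i as [|[|i]]; reflexivity.
  - destruct i as [|i]; [reflexivity|].
    simpl evens. change (nth (S i) (a :: evens t) d) with (nth i (evens t) d).
    rewrite IH. replace (2 * S i) with (S (S (2 * i))) by lia. reflexivity.
Qed.

Lemma length_odds : forall (l : list point), length (odds l) = Nat.div2 (length l).
Proof. fix IH 1. intros [|a [|b t]]; simpl; try rewrite IH; reflexivity. Qed.

Lemma lt_length_odds : forall (l : list point) i,
  2 * i + 1 < length l -> i < length (odds l).
Proof.
  fix IH 1. intros [|a [|b t]] i H; simpl in *; try lia.
  destruct i as [|i]; [lia|]. specialize (IH t i ltac:(lia)). lia.
Qed.

Lemma lt_length_evens : forall (l : list point) i,
  2 * i < length l -> i < length (evens l).
Proof.
  fix IH 1. intros [|a [|b t]] i H; simpl in *; try lia.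
  destruct i as [|i]; [lia|]. specialize (IH t i ltac:(lia)). lia.
Qed.

Lemma In_odds_nth (l : list point) i d :
  2 * i + 1 < length l -> In (nth (2 * i + 1) l d) (odds l).
Proof. intro H. rewrite <- nth_odds. apply nth_In, lt_length_odds, H. Qed.

Lemma In_evens_nth (l : list point) i d :
  2 * i < length l -> In (nth (2 * i) l d) (evens l).
Proof. intro H. rewrite <- nth_evens. apply nth_In, lt_length_evens, H. Qed.

Lemma nth_iter_odds : forall t l j d,
  nth j (Nat.iter t odds l) d = nth (2 ^ t * (j + 1) - 1) l d.
Proof.
  induction t as [|t IH]; intros l j d; simpl Nat.iter.
  - f_equal. simpl. lia.
  - rewrite nth_odds, IH. f_equal. rewrite Nat.pow_succ_r'. nia.
Qed.

Lemma horton_iter_odds : forall t k l, t <= k -> length l = 2 ^ k -> horton_rec k l ->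
  horton_rec (k - t) (Nat.iter t odds l) /\ length (Nat.iter t odds l) = 2 ^ (k - t).
Proof.
  induction t as [|t IH]; intros k l Ht Hl Hh.
  - rewrite Nat.sub_0_r. auto.
  - destruct (IH k l ltac:(lia) Hl Hh) as [Hrec Hlen]. simpl Nat.iter.
    replace (k - t) with (S (k - S t)) in Hrec, Hlen by lia.
    destruct Hrec as [_ [Hodd _]]. split; [exact Hodd|].
    rewrite length_odds, Hlen, Nat.pow_succ_r'. apply Nat.div2_double.
Qed.

Lemma horton_iter_odds_high_above k l t : length l = 2 ^ k -> horton_rec k l -> t < k ->
  high_above (odds (Nat.iter t odds l)) (evens (Nat.iter t odds l)).
Proof.
  intros Hl Hh Ht. destruct (horton_iter_odds t k l ltac:(lia) Hl Hh) as [Hrec _].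
  replace (k - t) with (S (k - S t)) in Hrec by lia. apply Hrec.
Qed.

(* Points are indexed from 1, so that the points of [Nat.iter t odds l] are
   exactly those whose index is a multiple of [2 ^ t]. *)
Definition pt (l : list point) (m : nat) : point := nth (m - 1) l (0%Z, 0%Z).

Lemma xsorted_nth_lt (l : list point) : xsorted l ->
  forall i j, i < j < length l -> (fst (nth i l (0%Z, 0%Z)) < fst (nth j l (0%Z, 0%Z)))%Z.
Proof.
  intros Hs. apply Sorted_StronglySorted in Hs; [| intros x y z; lia].
  induction Hs as [|a t Hs IH HF]; intros i j Hij; simpl in Hij; [lia|].
  destruct i as [|i], j as [|j]; try lia; simpl.
  - rewrite Forall_forall in HF. apply HF, nth_In. lia.
  - apply IH. lia.
Qed.

Lemma pt_x_lt (l : list point) a b : xsorted l ->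
  1 <= a -> a < b -> b <= length l -> (fst (pt l a) < fst (pt l b))%Z.
Proof. intros Hs Ha Hab Hb. apply xsorted_nth_lt; auto. lia. Qed.

Lemma pt_neq (l : list point) a b : xsorted l ->
  1 <= a -> a <> b -> 1 <= b -> a <= length l -> b <= length l -> pt l a <> pt l b.
Proof.
  intros Hs Ha Hab Hb Hal Hbl E.
  destruct (Nat.lt_total a b) as [L|[L|L]]; [| lia |].
  - pose proof (pt_x_lt l a b Hs Ha L Hbl). rewrite E in H. lia.
  - pose proof (pt_x_lt l b a Hs Hb L Hal). rewrite E in H. lia.
Qed.

Lemma In_size_bound : forall (l : list point) q, In q l ->
  (Z.abs (fst q) <= size l /\ Z.abs (snd q) <= size l)%Z.
Proof.
  induction l as [|a t IH]; intros q Hq; simpl in Hq; [contradiction|].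
  simpl. destruct Hq as [<-|Hq]; [lia|]. destruct (IH q Hq). lia.
Qed.

Lemma size_nonneg (l : list point) : (0 <= size l)%Z.
Proof. induction l as [|a t IH]; simpl; lia. Qed.

Lemma pt_size_bound (l : list point) a : 1 <= a -> a <= length l ->
  (Z.abs (fst (pt l a)) <= size l /\ Z.abs (snd (pt l a)) <= size l)%Z.
Proof. intros. apply In_size_bound, nth_In. lia. Qed.

Lemma pt_level_odd (l : list point) t i : 1 <= i ->
  pt l (2 ^ S t * i) = nth (2 * (i - 1) + 1) (Nat.iter t odds l) (0%Z, 0%Z).
Proof. intro Hi. unfold pt. rewrite nth_iter_odds, Nat.pow_succ_r'. f_equal; nia. Qed.

Lemma pt_level_even (l : list point) t w :
  pt l (2 ^ t * (2 * w + 1)) = nth (2 * w) (Nat.iter t odds l) (0%Z, 0%Z).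
Proof. unfold pt. rewrite nth_iter_odds. f_equal; nia. Qed.

Section HortonLevels.

Variables (k : nat) (l : list point).
Hypotheses (Hs : xsorted l) (Hl : length l = 2 ^ k) (Hh : horton_rec k l).

Lemma level_line_above t i j w : t < k ->
  1 <= i -> 1 <= j -> i <> j -> 2 ^ S t * i <= 2 ^ k -> 2 ^ S t * j <= 2 ^ k ->
  2 ^ t * (2 * w + 1) <= 2 ^ k ->
  line_above (pt l (2 ^ S t * i)) (pt l (2 ^ S t * j)) (pt l (2 ^ t * (2 * w + 1))).
Proof.
  intros Ht Hi Hj Hij Bi Bj Bw.
  pose proof (horton_iter_odds t k l ltac:(lia) Hl Hh) as [_ Hlen].
  assert (E : 2 ^ k = 2 ^ t * 2 ^ (k - t)) by (rewrite <- Nat.pow_add_r; f_equal; lia).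
  assert (Hne : pt l (2 ^ S t * i) <> pt l (2 ^ S t * j)).
  { pose proof (Nat.pow_nonzero 2 (S t)). apply pt_neq; try rewrite Hl; auto; nia. }
  rewrite (pt_level_odd l t i), (pt_level_odd l t j), pt_level_even in * by lia.
  rewrite Nat.pow_succ_r' in Bi, Bj. rewrite E in Bi, Bj, Bw.
  apply (horton_iter_odds_high_above k l t Hl Hh Ht); auto;
    [apply In_odds_nth | apply In_odds_nth | apply In_evens_nth];
    rewrite Hlen; pose proof (Nat.pow_nonzero 2 t); nia.
Qed.

Lemma level_line_below t i j w : t < k ->
  i <> j -> 2 ^ t * (2 * i + 1) <= 2 ^ k -> 2 ^ t * (2 * j + 1) <= 2 ^ k ->
  1 <= w -> 2 ^ S t * w <= 2 ^ k ->
  line_below (pt l (2 ^ t * (2 * i + 1))) (pt l (2 ^ t * (2 * j + 1))) (pt l (2 ^ S t * w)).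
Proof.
  intros Ht Hij Bi Bj Hw Bw.
  pose proof (horton_iter_odds t k l ltac:(lia) Hl Hh) as [_ Hlen].
  assert (E : 2 ^ k = 2 ^ t * 2 ^ (k - t)) by (rewrite <- Nat.pow_add_r; f_equal; lia).
  assert (Hne : pt l (2 ^ t * (2 * i + 1)) <> pt l (2 ^ t * (2 * j + 1))).
  { pose proof (Nat.pow_nonzero 2 t). apply pt_neq; try rewrite Hl; auto; nia. }
  rewrite (pt_level_odd l t w), !pt_level_even in * by lia.
  rewrite Nat.pow_succ_r' in Bw. rewrite E in Bi, Bj, Bw.
  apply (horton_iter_odds_high_above k l t Hl Hh Ht); auto;
    [apply In_evens_nth | apply In_evens_nth | apply In_odds_nth];
    rewrite Hlen; pose proof (Nat.pow_nonzero 2 t); nia.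
Qed.

End HortonLevels.

Open Scope R_scope.

Definition orientR (ax ay bx by_ cx cy : R) : R :=
  (bx - ax) * (cy - ay) - (by_ - ay) * (cx - ax).

Lemma IZR_orient (a b c : point) : IZR (orient a b c) =
  orientR (IZR (fst a)) (IZR (snd a)) (IZR (fst b)) (IZR (snd b)) (IZR (fst c)) (IZR (snd c)).
Proof. unfold orient, orientR. rewrite minus_IZR, !mult_IZR, !minus_IZR. reflexivity. Qed.

(* For [fst a < fst b], the signed vertical distance from the line [a b] up to [q]. *)
Definition height (a b q : point) : R := IZR (orient a b q) / IZR (fst b - fst a).

Lemma orientR_transfer (xc yc xc' yc' xp yp xu yu xm ym xv yv : R) :
  xc < xp -> xp < xc' -> xu < xv -> xm < xv -> xv < xp ->
  orientR xm ym xv yv xc yc < 0 -> orientR xm ym xv yv xc' yc' < 0 ->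
  0 < orientR xu yu xv yv xp yp ->
  orientR xu yu xv yv xm ym / (xv - xu) * ((xp - xv) / (xv - xm))
    <= orientR xc yc xc' yc' xp yp / (xc' - xc).
Proof.
  intros H1 H2 H3 H4 H5 O1 O2 O3.
  assert (E : orientR xc yc xc' yc' xp yp / (xc' - xc) =
    orientR xu yu xv yv xm ym / (xv - xu) * ((xp - xv) / (xv - xm))
    + orientR xu yu xv yv xp yp / (xv - xu)
    - (orientR xm ym xv yv xc yc * (xc' - xp) + orientR xm ym xv yv xc' yc' * (xp - xc))
      / ((xc' - xc) * (xv - xm))).
  { unfold orientR. field. repeat split; lra. }
  rewrite E.
  assert (0 < orientR xu yu xv yv xp yp / (xv - xu)) by (apply Rdiv_lt_0_compat; lra).
  assert ((orientR xm ym xv yv xc yc * (xc' - xp) + orientR xm ym xv yv xc' yc' * (xp - xc))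
          / ((xc' - xc) * (xv - xm)) < 0).
  { apply Rdiv_neg_pos; [|apply Rmult_lt_0_compat; lra].
    assert (orientR xm ym xv yv xc yc * (xc' - xp) < 0) by (apply Rmult_neg_pos; lra).
    assert (orientR xm ym xv yv xc' yc' * (xp - xc) < 0) by (apply Rmult_neg_pos; lra).
    lra. }
  lra.
Qed.

(* The line [m v] passes above [c] and [c'], so [p] is at least as high above [c c']
   as above [m v]; and as [p] is above [u v], which meets [m v] at [v], its height
   above [m v] is at least the gap between the two lines at [p]. *)
Lemma height_transfer (c c' p u m v : point) :
  (fst c < fst p)%Z -> (fst p < fst c')%Z -> (fst u < fst v)%Z -> (fst m < fst v)%Z ->
  (fst v < fst p)%Z ->
  line_above m v c -> line_above m v c' -> line_below u v p ->
  height u v m * (IZR (fst p - fst v) / IZR (fst v - fst m)) <= height c c' p.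
Proof.
  intros H1 H2 H3 H4 H5 A1 A2 B.
  unfold line_above, line_below in *.
  assert (O1 : (orient m v c < 0)%Z) by nia.
  assert (O2 : (orient m v c' < 0)%Z) by nia.
  assert (O3 : (0 < orient u v p)%Z) by nia.
  apply IZR_lt in O1, O2, O3, H1, H2, H3, H4, H5. rewrite IZR_orient in O1, O2, O3.
  unfold height. rewrite !IZR_orient, !minus_IZR.
  apply orientR_transfer; auto.
Qed.

Lemma exists_large_ratio (a b : nat -> R) (lam B : R) (M : nat) :
  0 < lam -> (1 <= M)%nat -> 1 <= a (M - 1)%nat ->
  (forall i, (S i < M)%nat -> a (S i) + b (S i) <= a i) ->
  a 0%nat <= B -> B < (1 + / lam) ^ (M - 1) ->
  exists i, (i < M)%nat /\ lam * b i <= a i.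
Proof.
  intros Hlam HM Hlast Hgap HB HBig. apply NNPP. intro Hne.
  assert (Hsmall : forall i, (i < M)%nat -> a i < lam * b i).
  { intros i Hi. apply Rnot_le_lt. intro C. apply Hne. exists i. auto. }
  assert (Hinv : 0 < / lam) by (apply Rinv_0_lt_compat, Hlam).
  assert (Hgrow : forall j, (j < M)%nat -> (1 + / lam) ^ j <= a (M - 1 - j)%nat).
  { induction j as [|j IH]; intros Hj.
    - rewrite Nat.sub_0_r. simpl. lra.
    - specialize (IH ltac:(lia)).
      assert (Hi : (S (M - 1 - S j) = M - 1 - j)%nat) by lia.
      pose proof (Hgap (M - 1 - S j)%nat ltac:(lia)) as Hg. rewrite Hi in Hg.
      pose proof (Hsmall (M - 1 - j)%nat ltac:(lia)) as Hr.
      assert (Hb : a (M - 1 - j)%nat / lam < b (M - 1 - j)%nat).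
      { apply (Rmult_lt_reg_l lam); auto. field_simplify; lra. }
      assert (0 <= (1 + / lam) ^ j) by (apply pow_le; lra).
      assert ((1 + / lam) * (1 + / lam) ^ j <= (1 + / lam) * a (M - 1 - j)%nat)
        by (apply Rmult_le_compat_l; lra).
      assert ((1 + / lam) * a (M - 1 - j)%nat = a (M - 1 - j)%nat + a (M - 1 - j)%nat / lam)
        by (field; lra).
      simpl. lra. }
  specialize (Hgrow (M - 1)%nat ltac:(lia)). rewrite Nat.sub_diag in Hgrow. lra.
Qed.

(* At level [t] (the points of [Nat.iter t odds l]) the index [2 ^ (t + 2) * w] is an
   odd point, flanked by the even points [2 ^ (t + 2) * w -/+ 2 ^ t]. *)
Definition level_height_ge (l : list point) (k t V : nat) (L : R) : Prop :=
  forall w, (V <= w)%nat -> (2 ^ (t + 2) * w + 2 ^ t <= 2 ^ k)%nat ->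
    L <= height (pt l (2 ^ (t + 2) * w - 2 ^ t)) (pt l (2 ^ (t + 2) * w + 2 ^ t))
                (pt l (2 ^ (t + 2) * w)).

Lemma level_height_ge_weaken l k t V1 V2 L1 L2 :
  (V2 <= V1)%nat -> L1 <= L2 -> level_height_ge l k t V2 L2 -> level_height_ge l k t V1 L1.
Proof. intros HV HL HS w Hw Hb. specialize (HS w ltac:(lia) Hb). lra. Qed.

Lemma pow2_level_facts (t : nat) : (2 ^ (t + 2) = 4 * 2 ^ t /\ 2 ^ (S t + 2) = 8 * 2 ^ t /\
  2 ^ S t = 2 * 2 ^ t /\ 2 ^ S (S t) = 4 * 2 ^ t /\ 1 <= 2 ^ t)%nat.
Proof.
  pose proof (Nat.pow_nonzero 2 t).
  rewrite !Nat.pow_add_r, !Nat.pow_succ_r'. simpl. lia.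
Qed.

Lemma size_pos (l : list point) : xsorted l -> (2 <= length l)%nat -> (0 < size l)%Z.
Proof.
  intros Hs Hl. pose proof (pt_x_lt l 1 2 Hs ltac:(lia) ltac:(lia) Hl).
  destruct (pt_size_bound l 1 ltac:(lia) ltac:(lia)).
  destruct (pt_size_bound l 2 ltac:(lia) Hl). lia.
Qed.

Section LevelHeights.

Variables (k : nat) (l : list point).
Hypotheses (Hs : xsorted l) (Hl : length l = (2 ^ k)%nat) (Hh : horton_rec k l).

Lemma pt_x_lt_pow (a b : nat) :
  (1 <= a)%nat -> (a < b)%nat -> (b <= 2 ^ k)%nat -> (fst (pt l a) < fst (pt l b))%Z.
Proof. intros. apply pt_x_lt; auto. lia. Qed.

Lemma level_height_ge_top (T : nat) : (T < k)%nat ->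
  level_height_ge l k T 1 (/ IZR (2 * size l)).
Proof.
  intros HT w Hw Hb.
  destruct (pow2_level_facts T) as (E1 & _ & E3 & _ & HD).
  rewrite E1 in *. set (D := (2 ^ T)%nat) in *.
  assert (HB : line_below (pt l (4 * D * w - D)) (pt l (4 * D * w + D)) (pt l (4 * D * w))).
  { replace (4 * D * w - D)%nat with (2 ^ T * (2 * (2 * w - 1) + 1))%nat by (fold D; nia).
    replace (4 * D * w + D)%nat with (2 ^ T * (2 * (2 * w) + 1))%nat by (fold D; nia).
    replace (4 * D * w)%nat with (2 ^ S T * (2 * w))%nat by (rewrite E3; fold D; nia).
    apply (level_line_below k l); auto; try lia; rewrite ?E3; fold D; nia. }
  assert (Hx : (fst (pt l (4 * D * w - D)) < fst (pt l (4 * D * w + D)))%Z)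
    by (apply pt_x_lt_pow; nia).
  destruct (pt_size_bound l (4 * D * w - D)) as [Hc _]; try (rewrite ?Hl; nia).
  destruct (pt_size_bound l (4 * D * w + D)) as [Hc' _]; try (rewrite ?Hl; nia).
  unfold line_below in HB. unfold height.
  set (o := orient (pt l (4 * D * w - D)) (pt l (4 * D * w + D)) (pt l (4 * D * w))) in *.
  set (dx := (fst (pt l (4 * D * w + D)) - fst (pt l (4 * D * w - D)))%Z) in *.
  assert (Hdx : (1 <= dx <= 2 * size l)%Z) by (unfold dx; lia).
  assert (Ho : (1 <= o)%Z) by nia.
  apply IZR_le in Ho. destruct Hdx as [Hd1 Hd2]. apply IZR_le in Hd1, Hd2.
  apply (Rle_trans _ (/ IZR dx)).
  - apply Rinv_le_contravar; lra.
  - unfold Rdiv. rewrite <- (Rmult_1_l (/ IZR dx)) at 1.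
    apply Rmult_le_compat_r; [left; apply Rinv_0_lt_compat|]; lra.
Qed.

Lemma level_height_transfer (t u w : nat) : (t + 2 <= k)%nat -> (1 <= u)%nat ->
  (2 * u + 1 <= w)%nat -> (4 * 2 ^ t * w + 2 ^ t <= 2 ^ k)%nat ->
  height (pt l (8 * 2 ^ t * u - 2 * 2 ^ t)) (pt l (8 * 2 ^ t * u + 2 * 2 ^ t))
         (pt l (8 * 2 ^ t * u))
  * (IZR (fst (pt l (4 * 2 ^ t * w)) - fst (pt l (8 * 2 ^ t * u + 2 * 2 ^ t)))
     / IZR (fst (pt l (8 * 2 ^ t * u + 2 * 2 ^ t)) - fst (pt l (8 * 2 ^ t * u))))
  <= height (pt l (4 * 2 ^ t * w - 2 ^ t)) (pt l (4 * 2 ^ t * w + 2 ^ t))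
            (pt l (4 * 2 ^ t * w)).
Proof.
  intros Ht Hu Hw Hb.
  destruct (pow2_level_facts t) as (_ & _ & E3 & E4 & HD). set (D := (2 ^ t)%nat) in *.
  apply height_transfer; try (apply pt_x_lt_pow; nia).
  - replace (8 * D * u + 2 * D)%nat with (2 ^ S t * (4 * u + 1))%nat
      by (rewrite E3; fold D; nia).
    replace (8 * D * u)%nat with (2 ^ S t * (4 * u))%nat by (rewrite E3; fold D; nia).
    replace (4 * D * w - D)%nat with (2 ^ t * (2 * (2 * w - 1) + 1))%nat by (fold D; nia).
    apply (level_line_above k l); auto; try lia; rewrite ?E3; fold D; nia.
  - replace (8 * D * u + 2 * D)%nat with (2 ^ S t * (4 * u + 1))%nat
      by (rewrite E3; fold D; nia).
    replace (8 * D * u)%nat with (2 ^ S t * (4 * u))%nat by (rewrite E3; fold D; nia).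
    replace (4 * D * w + D)%nat with (2 ^ t * (2 * (2 * w) + 1))%nat by (fold D; nia).
    apply (level_line_above k l); auto; try lia; rewrite ?E3; fold D; nia.
  - replace (8 * D * u + 2 * D)%nat with (2 ^ S t * (2 * (2 * u) + 1))%nat
      by (rewrite E3; fold D; nia).
    replace (8 * D * u - 2 * D)%nat with (2 ^ S t * (2 * (2 * u - 1) + 1))%nat
      by (rewrite E3; fold D; nia).
    replace (4 * D * w)%nat with (2 ^ S (S t) * w)%nat by (rewrite E4; fold D; nia).
    apply (level_line_below k l); auto; try lia; rewrite ?E3, ?E4; fold D; nia.
Qed.

Lemma level_height_ge_step (t V M : nat) (L lam : R) : (t + 2 <= k)%nat ->
  (1 <= V)%nat -> 0 <= L -> (1 <= M)%nat -> 0 < lam ->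
  IZR (2 * size l) < (1 + / lam) ^ (M - 1) ->
  level_height_ge l k (S t) V L -> level_height_ge l k t (2 * (V + M)) (lam * L).
Proof.
  intros Ht HV HL HM Hlam Hbig HS w Hw Hb.
  destruct (pow2_level_facts t) as (E1 & E2 & E3 & E4 & HD).
  rewrite E1 in *. set (D := (2 ^ t)%nat) in *.
  (* candidate segments [m v] of level [t + 1]: [m = 8 D (V + i)], [v = m + 2 D] *)
  set (a := fun i : nat =>
    IZR (fst (pt l (4 * D * w)) - fst (pt l (8 * D * (V + i) + 2 * D)))).
  set (b := fun i : nat =>
    IZR (fst (pt l (8 * D * (V + i) + 2 * D)) - fst (pt l (8 * D * (V + i))))).
  destruct (exists_large_ratio a b lam (IZR (2 * size l)) M Hlam HM) as [i [Hi Hgood]]; auto.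
  { unfold a. apply IZR_le.
    enough (fst (pt l (8 * D * (V + (M - 1)) + 2 * D)) < fst (pt l (4 * D * w)))%Z by lia.
    apply pt_x_lt_pow; nia. }
  { intros i Hi. unfold a, b. rewrite <- plus_IZR. apply IZR_le.
    enough (fst (pt l (8 * D * (V + i) + 2 * D)) < fst (pt l (8 * D * (V + S i))))%Z by lia.
    apply pt_x_lt_pow; nia. }
  { unfold a. apply IZR_le.
    destruct (pt_size_bound l (4 * D * w)); try (rewrite ?Hl; nia).
    destruct (pt_size_bound l (8 * D * (V + 0) + 2 * D)); rewrite ?Hl; nia. }
  specialize (HS (V + i)%nat ltac:(lia)).
  rewrite E2, E3 in HS. fold D in HS.
  specialize (HS ltac:(nia)).
  assert (Hbpos : 0 < b i).
  { unfold b. apply IZR_lt.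
    enough (fst (pt l (8 * D * (V + i))) < fst (pt l (8 * D * (V + i) + 2 * D)))%Z by lia.
    apply pt_x_lt_pow; nia. }
  assert (Hratio : lam <= a i / b i).
  { apply (Rmult_le_reg_r (b i)); auto. field_simplify; lra. }
  apply (Rle_trans _ (height (pt l (8 * D * (V + i) - 2 * D)) (pt l (8 * D * (V + i) + 2 * D))
                              (pt l (8 * D * (V + i))) * (a i / b i))).
  - rewrite (Rmult_comm _ (a i / b i)). apply Rmult_le_compat; lra.
  - exact (level_height_transfer t (V + i) w Ht ltac:(lia) ltac:(lia) Hb).
Qed.

Lemma height_le_double_size (w : nat) : (1 <= w)%nat -> (4 * w + 1 <= 2 ^ k)%nat ->
  height (pt l (4 * w - 1)) (pt l (4 * w + 1)) (pt l (4 * w)) <= IZR (2 * size l).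
Proof.
  intros Hw Hb.
  assert (H1 : (fst (pt l (4 * w - 1)) < fst (pt l (4 * w)))%Z) by (apply pt_x_lt_pow; lia).
  assert (H2 : (fst (pt l (4 * w)) < fst (pt l (4 * w + 1)))%Z) by (apply pt_x_lt_pow; lia).
  destruct (pt_size_bound l (4 * w - 1)) as [_ B1]; rewrite ?Hl; try lia.
  destruct (pt_size_bound l (4 * w + 1)) as [_ B2]; rewrite ?Hl; try lia.
  destruct (pt_size_bound l (4 * w)) as [_ B3]; rewrite ?Hl; try lia.
  unfold height, orient.
  destruct (pt l (4 * w - 1)) as [xc yc], (pt l (4 * w + 1)) as [xd yd],
           (pt l (4 * w)) as [xp yp]. cbn [fst snd] in *.
  assert (Hz : ((xd - xc) * (yp - yc) - (yd - yc) * (xp - xc) <= 2 * size l * (xd - xc))%Z).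
  { replace ((xd - xc) * (yp - yc) - (yd - yc) * (xp - xc))%Z
      with ((xp - xc) * (yp - yd) + (xd - xp) * (yp - yc))%Z by ring.
    assert ((xp - xc) * (yp - yd) <= (xp - xc) * (2 * size l))%Z
      by (apply Z.mul_le_mono_nonneg_l; lia).
    assert ((xd - xp) * (yp - yc) <= (xd - xp) * (2 * size l))%Z
      by (apply Z.mul_le_mono_nonneg_l; lia).
    nia. }
  apply IZR_le in Hz. rewrite mult_IZR in Hz.
  assert (Hp : 0 < IZR (xd - xc)) by (apply IZR_lt; lia).
  apply (Rmult_le_reg_r (IZR (xd - xc))); auto.
  unfold Rdiv. rewrite Rmult_assoc, Rinv_l by lra. lra.
Qed.

End LevelHeights.

Lemma level_height_ge_chain (k T K : nat) (l : list point) (M e : nat -> nat) :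
  xsorted l -> length l = (2 ^ k)%nat -> horton_rec k l -> (T < k)%nat ->
  0 < IZR (2 * size l) ->
  (forall t, (t < T)%nat -> (t + 2 <= k)%nat /\ (1 <= M t)%nat /\
     (2 ^ (t + 3) * M t = K)%nat /\ IZR (2 * size l) < (1 + / 2 ^ e t) ^ (M t - 1)) ->
  forall d, (d <= T)%nat -> exists V,
    (2 ^ (T - d + 2) * V = 2 ^ (T + 2) + d * K)%nat /\ (1 <= V)%nat /\
    level_height_ge l k (T - d) V (2 ^ list_sum (map e (seq (T - d) d)) / IZR (2 * size l)).
Proof.
  intros Hs Hl Hh HT Hpos Hsched. induction d as [|d IH]; intros Hd.
  - exists 1%nat. rewrite Nat.sub_0_r. repeat split; [lia | lia |].
    simpl. unfold Rdiv. rewrite Rmult_1_l. apply level_height_ge_top; auto.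
  - destruct IH as (V & HVeq & HV & Hbound); [lia|].
    set (t := (T - S d)%nat) in *.
    destruct (Hsched t ltac:(lia)) as (Ht & HM & HK & Hbig).
    replace (T - d)%nat with (S t) in HVeq, Hbound by lia.
    exists (2 * (V + M t))%nat. repeat split; [| lia |].
    + rewrite Nat.pow_add_r in *. rewrite Nat.pow_succ_r' in HVeq. simpl in *. nia.
    + rewrite <- cons_seq. simpl list_sum.
      eapply level_height_ge_weaken; [| |
        apply (level_height_ge_step k l Hs Hl Hh t V (M t)
                 (2 ^ list_sum (map e (seq (S t) d)) / IZR (2 * size l)) (2 ^ e t)); auto].
      * lia.
      * rewrite pow_add. unfold Rdiv. lra.
      * unfold Rdiv. apply Rmult_le_pos; [apply pow_le; lra | left; apply Rinv_0_lt_compat; auto].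
      * apply pow_lt. lra.
Qed.

Lemma horton_double_size_sq (k T K : nat) (l : list point) (M e : nat -> nat) :
  xsorted l -> length l = (2 ^ k)%nat -> horton_rec k l -> (T < k)%nat ->
  (2 ^ (T + 2) + T * K < 2 ^ k)%nat ->
  (forall t, (t < T)%nat -> (t + 2 <= k)%nat /\ (1 <= M t)%nat /\
     (2 ^ (t + 3) * M t = K)%nat /\ IZR (2 * size l) < (1 + / 2 ^ e t) ^ (M t - 1)) ->
  2 ^ list_sum (map e (seq 0 T)) <= IZR (2 * size l) ^ 2.
Proof.
  intros Hs Hl Hh HT HK Hsched.
  assert (Hpos : 0 < IZR (2 * size l)).
  { apply IZR_lt. enough (0 < size l)%Z by lia. apply size_pos; auto. rewrite Hl.
    replace k with (S (k - 1)) by lia. rewrite Nat.pow_succ_r'.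
    pose proof (Nat.pow_nonzero 2 (k - 1)). lia. }
  destruct (level_height_ge_chain k T K l M e Hs Hl Hh HT Hpos Hsched T (le_n T))
    as (V & HVeq & HV & Hbound).
  rewrite Nat.sub_diag in HVeq, Hbound. change (2 ^ (0 + 2))%nat with 4%nat in HVeq.
  specialize (Hbound V (le_n V) ltac:(simpl; lia)).
  change (2 ^ (0 + 2))%nat with 4%nat in Hbound. change (2 ^ 0)%nat with 1%nat in Hbound.
  pose proof (height_le_double_size k l Hs Hl V HV ltac:(lia)) as Htop.
  assert (Hgain : 2 ^ list_sum (map e (seq 0 T)) / IZR (2 * size l) <= IZR (2 * size l)) by lra.
  apply (Rmult_le_compat_r (IZR (2 * size l))) in Hgain; [|lra].
  unfold Rdiv in Hgain. rewrite Rmult_assoc, Rinv_l in Hgain by lra. lra.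
Qed.

Lemma bernoulli_ineq (x : R) (m : nat) : 0 <= x -> 1 + INR m * x <= (1 + x) ^ m.
Proof.
  intro Hx. induction m as [|m IH].
  - simpl. lra.
  - rewrite S_INR. simpl. pose proof (pos_INR m).
    assert (0 <= INR m * x * x) by (repeat apply Rmult_le_pos; auto).
    nra.
Qed.

Lemma pow2_le_pow_one_plus_inv (e Q m : nat) :
  (2 ^ e * Q <= m)%nat -> 2 ^ Q <= (1 + / 2 ^ e) ^ m.
Proof.
  intro H.
  assert (Hp : 0 < 2 ^ e) by (apply pow_lt; lra).
  assert (Hinv : 0 < / 2 ^ e) by (apply Rinv_0_lt_compat, Hp).
  assert (H2 : 2 <= (1 + / 2 ^ e) ^ (2 ^ e)).
  { pose proof (bernoulli_ineq (/ 2 ^ e) (2 ^ e) ltac:(lra)) as B.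
    rewrite pow_INR in B. simpl INR in B. rewrite Rinv_r in B by lra. lra. }
  apply (Rle_trans _ ((1 + / 2 ^ e) ^ (2 ^ e * Q))).
  - rewrite pow_mult. apply pow_incr. lra.
  - apply Rle_pow; [lra | exact H].
Qed.

Close Scope R_scope.

Lemma twice_sum_linear_decreasing (k c T : nat) : T + c <= k ->
  2 * list_sum (map (fun t => k - t - c) (seq 0 T)) + T * (T - 1) = 2 * T * (k - c).
Proof.
  induction T as [|T IH]; intros HT; [reflexivity|].
  rewrite seq_S, map_app, list_sum_app. simpl. specialize (IH ltac:(lia)).
  destruct T; simpl in *; nia.
Qed.

Lemma pow2_ge_linear (L : nat) : 8 <= L -> 12 * L + 37 <= 2 ^ L.
Proof.
  intro H. induction L as [|L IH]; [lia|].
  destruct (Nat.eq_dec L 7) as [->|Hn]; [simpl; lia|].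
  specialize (IH ltac:(lia)). rewrite Nat.pow_succ_r'. lia.
Qed.

Lemma log2_succ_bounds (k : nat) : 256 <= k ->
  k < 2 ^ (Nat.log2 k + 1) /\ 12 * (Nat.log2 k + 1) + 25 <= k.
Proof.
  intro Hk. destruct (Nat.log2_spec k ltac:(lia)) as [H1 H2].
  assert (HL : 8 <= Nat.log2 k).
  { change 8 with (Nat.log2 (2 ^ 8)). apply Nat.log2_le_mono. simpl. lia. }
  pose proof (pow2_ge_linear _ HL). rewrite Nat.add_1_r. lia.
Qed.

(* With [k < 2 ^ r], level [t] gains [e t = k - t - 3 r - 5] bits using
   [M t = 2 ^ (e t + 2 r + 1)] candidate segments; over the levels [t < k / 2]
   the gains add up to about [3 k ^ 2 / 8 > k ^ 2 / 4], and the candidates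
   of all levels fit among the [2 ^ k] points. *)
Lemma horton_schedule (k : nat) : 256 <= k ->
  exists T K (M e : nat -> nat), T < k /\ 2 ^ (T + 2) + T * K < 2 ^ k /\
    k * k + 8 <= 4 * list_sum (map e (seq 0 T)) /\
    forall t, t < T -> t + 2 <= k /\ 1 <= M t /\ 2 ^ (t + 3) * M t = K /\
      (2 ^ (k * k / 8 + 2) <= (1 + / 2 ^ e t) ^ (M t - 1))%R.
Proof.
  intro Hk. destruct (log2_succ_bounds k Hk) as [Hr1 Hr2].
  set (r := Nat.log2 k + 1) in *.
  set (T := k / 2).
  assert (HT : 2 * T <= k <= 2 * T + 1).
  { pose proof (Nat.div_mod_eq k 2). pose proof (Nat.mod_upper_bound k 2 ltac:(lia)).
    unfold T. lia. }
  exists T, (2 ^ (k - r - 1)), (fun t => 2 ^ (k - t - (r + 4))), (fun t => k - t - (3 * r + 5)).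
  split; [lia|]. split; [|split].
  - assert (E1 : 2 ^ k = 4 * 2 ^ (k - 2))
      by (change 4 with (2 ^ 2); rewrite <- Nat.pow_add_r; f_equal; lia).
    assert (E2 : 2 ^ (T + 2) <= 2 ^ (k - 2)) by (apply Nat.pow_le_mono_r; lia).
    assert (E3 : 2 ^ (k - 2) = 2 ^ (k - r - 1) * 2 ^ (r - 1))
      by (rewrite <- Nat.pow_add_r; f_equal; lia).
    assert (E4 : 2 ^ r = 2 * 2 ^ (r - 1))
      by (rewrite <- Nat.pow_succ_r'; f_equal; lia).
    pose proof (Nat.pow_nonzero 2 (k - r - 1)). nia.
  - pose proof (twice_sum_linear_decreasing k (3 * r + 5) T ltac:(lia)).
    assert (T >= 6 * r + 12) by lia. nia.
  - intros t Ht. split; [lia|]. split.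
    { pose proof (Nat.pow_nonzero 2 (k - t - (r + 4))). lia. }
    split; [rewrite <- Nat.pow_add_r; f_equal; lia|].
    apply pow2_le_pow_one_plus_inv.
    assert (E : 2 ^ (k - t - (r + 4)) = 2 ^ (k - t - (3 * r + 5)) * (2 * 2 ^ (2 * r)))
      by (rewrite <- Nat.pow_succ_r', <- Nat.pow_add_r; f_equal; lia).
    assert (HQ : k * k / 8 + 2 <= 2 ^ (2 * r)).
    { assert (E2 : 2 ^ (2 * r) = 2 ^ r * 2 ^ r)
        by (rewrite <- Nat.pow_add_r; f_equal; lia).
      assert (k * k < 2 ^ r * 2 ^ r) by (apply Nat.mul_lt_mono; lia).
      pose proof (Nat.div_mod_eq (k * k) 8). nia. }
    rewrite E. pose proof (Nat.pow_nonzero 2 (k - t - (3 * r + 5))).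
    pose proof (Nat.pow_nonzero 2 (2 * r)). nia.
Qed.

Open Scope R_scope.

Lemma Rpower_sq_div8_le_of_pow2_le (k G : nat) (s : R) : (k * k + 8 <= 4 * G)%nat ->
  0 <= s -> 2 ^ G <= (2 * s) ^ 2 -> Rpower 2 (INR k * (/ 8 * INR k)) <= s.
Proof.
  intros HG Hs Hsq. set (X := INR k * (/ 8 * INR k)).
  assert (HX : X + X + 2 <= INR G).
  { apply le_INR in HG. rewrite plus_INR, !mult_INR in HG.
    replace (INR 8) with 8 in HG by (simpl; lra). replace (INR 4) with 4 in HG by (simpl; lra).
    unfold X. lra. }
  assert (Hle : Rpower 2 X * Rpower 2 X * 2 ^ 2 <= 2 ^ G).
  { rewrite <- (Rpower_pow 2 2), <- !Rpower_plus, <- (Rpower_pow G 2) by lra.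
    apply Rle_Rpower; simpl; lra. }
  pose proof (exp_pos (X * ln 2)). unfold Rpower in *. nra.
Qed.

Lemma Rpower_sq_div8_le_of_large (k : nat) (s : R) :
  2 ^ (k * k / 8 + 2) <= 2 * s -> Rpower 2 (INR k * (/ 8 * INR k)) <= s.
Proof.
  intro Hs.
  assert (HX : INR k * (/ 8 * INR k) <= INR (k * k / 8 + 1)).
  { pose proof (Nat.div_mod_eq (k * k) 8). pose proof (Nat.mod_upper_bound (k * k) 8 ltac:(lia)).
    assert (Hn : (k * k <= 8 * (k * k / 8 + 1))%nat) by lia.
    apply le_INR in Hn. rewrite !mult_INR in Hn.
    replace (INR 8) with 8 in Hn by (simpl; lra). lra. }
  apply (Rle_trans _ (2 ^ (k * k / 8 + 1))).
  - rewrite <- Rpower_pow by lra. apply Rle_Rpower; lra.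
  - rewrite Nat.add_succ_r, <- tech_pow_Rmult in Hs. lra.
Qed.

Lemma horton_bound_as_Rpower (k : nat) :
  Rpower (INR (Nat.pow 2 k)) (/ 8 * log2R (INR (Nat.pow 2 k)))
  = Rpower 2 (INR k * (/ 8 * INR k)).
Proof.
  assert (Hln : 0 < ln 2) by (rewrite <- ln_1; apply ln_increasing; lra).
  assert (E : INR (Nat.pow 2 k) = 2 ^ k) by (rewrite pow_INR; reflexivity).
  unfold log2R. rewrite E, ln_pow, <- (Rpower_pow k 2), Rpower_mult by lra.
  f_equal. field. lra.
Qed.

Theorem theorem2 :
  exists k0 : nat, forall k : nat, (k0 <= k)%nat ->
    forall H : list point, is_horton k H ->
      (Rpower (INR (Nat.pow 2 k)) (/ 8 * log2R (INR (Nat.pow 2 k))) <= IZR (size H))%R.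
Proof.
  exists 256%nat. intros k Hk l (Hs & _ & Hl & Hh).
  rewrite horton_bound_as_Rpower.
  destruct (horton_schedule k Hk) as (T & K & M & e & HT & HK & Hgain & Hsched).
  destruct (Rlt_or_le (IZR (2 * size l)) (2 ^ (k * k / 8 + 2))) as [Hsmall | Hlarge].
  - apply (Rpower_sq_div8_le_of_pow2_le k (list_sum (map e (seq 0 T)))); auto.
    + apply IZR_le, size_nonneg.
    + rewrite <- mult_IZR. apply (horton_double_size_sq k T K l M e); auto.
      intros t Ht. destruct (Hsched t Ht) as (? & ? & ? & ?). repeat split; auto. lra.
  - rewrite mult_IZR in Hlarge. apply Rpower_sq_div8_le_of_large, Hlarge.
Qed.
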